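(* Let $k$ be an infinite field, let $\Gamma$ be a finite simplicial complex of dimension $d-1$, and let $S_1,\ldots,S_d$ be subsets of the vertex set of $\Gamma$. Then there is an l.s.o.p. $\theta_1,\ldots,\theta_d$ for the face ring $k[\Gamma]$ with $\mathrm{supp}(\theta_i)=S_i$ for $1\le i\le d$ if and only if, for every face $F\in\Gamma$, $|\{i: S_i\cap F\ne\emptyset\}|\ge|F|$.
   Context: $k[\Gamma]$ is the face ring: the polynomial ring in variables $x_w$ indexed by the vertices of $\Gamma$ modulo the monomials $x^F=\prod_{w\in F}x_w$ for non-faces $F$, graded by degree. The support of a degree-one element $\theta=\sum a_wx_w$ is $\{w:a_w\ne0\}$. An l.s.o.p. for $k[\Gamma]$ (Krull dimension $d$) is a sequence of $d$ degree-one elements $\theta_1,\ldots,\theta_d$ such that $k[\Gamma]/(\theta_1,\ldots,\theta_d)$ is finite-dimensional over $k$. *)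

From HB Require Import structures.
From mathcomp Require Import all_boot all_order all_algebra.
From mathcomp Require Import mpoly.
Set Implicit Arguments. Unset Strict Implicit. Unset Printing Implicit Defensive.
Import Order.TTheory GRing.Theory.
Local Open Scope ring_scope.

Definition infinite_field (k : fieldType) : Prop :=
  forall s : seq k, exists x : k, x \notin s.

Definition simplicial_complex n (Gamma : {set {set 'I_n}}) : Prop :=
  set0 \in Gamma /\ forall F G : {set 'I_n}, F \in Gamma -> G \subset F -> G \in Gamma.

Definition vertices n (Gamma : {set {set 'I_n}}) : {set 'I_n} :=
  [set w | [set w] \in Gamma].

(* dim Gamma = d - 1  iff the maximal face cardinality is d. *)
Definition has_dim_minus1 n (Gamma : {set {set 'I_n}}) (d : nat) : Prop :=
  (\max_(F in Gamma) #|F|)%N = d.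

Definition monoF (k : fieldType) n (F : {set 'I_n}) : {mpoly k[n]} :=
  \prod_(w in F) 'X_w.

Definition linform (k : fieldType) n (a : 'I_n -> k) : {mpoly k[n]} :=
  \sum_(w < n) a w *: 'X_w.
Definition supp (k : fieldType) n (a : 'I_n -> k) : {set 'I_n} :=
  [set w | a w != 0].

Definition in_ideal (k : fieldType) n (G : seq {mpoly k[n]}) (p : {mpoly k[n]}) : Prop :=
  exists cs : seq {mpoly k[n]},
    size cs = size G /\ p = \sum_(i < size G) cs`_i * G`_i.

Definition fin_dim_quotient (k : fieldType) n (G : seq {mpoly k[n]}) : Prop :=
  exists B : seq {mpoly k[n]}, forall p : {mpoly k[n]},
    exists c : seq k, in_ideal G (p - \sum_(i < size B) c`_i *: B`_i).

Definition SR_gens (k : fieldType) n (Gamma : {set {set 'I_n}}) : seq {mpoly k[n]} :=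
  [seq monoF k F | F <- enum [set F : {set 'I_n} | F \notin Gamma]].

(* theta_1..theta_d is an l.s.o.p. for k[Gamma]:
   k[Gamma]/(theta) = k[x]/(I_Gamma + (theta)) is finite-dimensional. *)
Definition is_lsop (k : fieldType) n d (Gamma : {set {set 'I_n}})
    (theta : 'I_d -> {mpoly k[n]}) : Prop :=
  fin_dim_quotient (SR_gens k Gamma ++ [seq theta i | i <- enum 'I_d]).

From HB Require Import structures.
From mathcomp Require Import all_boot all_order all_algebra.
From mathcomp Require Import mpoly.
Set Implicit Arguments. Unset Strict Implicit. Unset Printing Implicit Defensive.
Import Order.TTheory GRing.Theory.
Local Open Scope ring_scope.

(* By the Kind-Kleinschmidt criterion, theta_1..theta_d is an l.s.o.p. for k[Gamma]
   iff for every face F the restrictions of the theta_i to the variables x_w, w in F,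
   span all linear forms on F. If they do, then modulo the theta_i every x_w with w in F
   is a combination of variables outside F; this pushes every monomial of degree
   > d = max |F| onto a non-face, so the quotient is spanned by the monomials of degree
   <= d. If they do not, some nonzero v supported on F kills every theta_i, and the
   substitution x_w := v_w t kills the whole ideal but no power of x_w with v_w <> 0.
   For forms with supports S_i, spanning on F forces |F| <= #{i : S_i meets F}.
   Conversely, under this condition Hall's theorem gives for each face F an injection
   sigma : F -> [d] with w in S_(sigma w); the corresponding maximal minor is then a
   nonzero polynomial in the coefficients, and over an infinite field these finitely
   many minors and the coefficients on the S_i have a common non-root. *)


Section Hall.
Variables (I J : finType) (E : J -> I -> bool).
Implicit Types (G H K : {set J}) (T : {set I}) (s : J -> I).

Definition nbhd (H : {set J}) (T : {set I}) : {set I} :=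
  [set i in T | [exists w in H, E w i]].

Definition hall_cond (G : {set J}) (T : {set I}) : Prop :=
  forall H : {set J}, H \subset G -> (#|H| <= #|nbhd H T|)%N.

Definition matching (G : {set J}) (T : {set I}) (s : J -> I) : Prop :=
  {in G &, injective s} /\ forall w, w \in G -> s w \in T /\ E w (s w).

Lemma matching_nbhd G T s : matching G T s -> matching G (nbhd G T) s.
Proof.
move=> [inj_s sGT]; split=> // w wG; have [sT Es] := sGT w wG.
by split=> //; rewrite inE sT; apply/existsP; exists w; rewrite wG.
Qed.

Lemma matchingU H K T1 T2 s1 s2 :
  matching H T1 s1 -> matching K T2 s2 -> [disjoint T1 & T2] ->
  matching (H :|: K) (T1 :|: T2) (fun w => if w \in H then s1 w else s2 w).
Proof.
move=> [inj1 sHT1] [inj2 sKT2] dT; have inK w : w \in H :|: K -> w \notin H -> w \in K.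
  by rewrite inE => /orP[->|].
split=> [x y xHK yHK|w wHK].
  case xH: (x \in H); case yH: (y \in H).
  - exact: inj1.
  - move=> e; have := (sKT2 y (inK y yHK (negbT yH))).1.
    by rewrite -e (disjointFr dT) // (sHT1 x xH).1.
  - move=> e; have := (sKT2 x (inK x xHK (negbT xH))).1.
    by rewrite e (disjointFr dT) // (sHT1 y yH).1.
  - by apply: inj2; apply: inK; rewrite ?xH ?yH.
rewrite inE; case: ifP => wH; first by have [-> ?] := sHT1 w wH.
by have [-> ?] := sKT2 w (inK w wHK (negbT wH)); rewrite orbT.
Qed.

Lemma hall_cond_tight G H T : hall_cond G T -> H \subset G ->
  (#|nbhd H T| <= #|H|)%N -> hall_cond (G :\: H) (T :\: nbhd H T).
Proof.
move=> hG sHG tightH K sK.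
have dKH : [disjoint K & H].
  by rewrite disjoints_subset (subset_trans sK) // setDE subsetIr.
have := hG (K :|: H); rewrite subUset sHG (subset_trans sK (subsetDl _ _)) => /(_ isT).
rewrite (cardsU K H) (disjoint_setI0 dKH) cards0 subn0 => hKH.
rewrite -(leq_add2r #|H|); apply: leq_trans hKH _.
apply: (@leq_trans (#|nbhd K (T :\: nbhd H T)| + #|nbhd H T|)); last by rewrite leq_add2l.
apply: leq_trans (leq_card_setU _ _).1; apply: subset_leq_card; apply/subsetP => i.
rewrite !inE => /andP[iT /existsP[w /andP[]]]; rewrite inE iT /= => /orP[wK Ew|wH Ew].
  have eK : [exists w in K, E w i] by apply/existsP; exists w; rewrite wK.
  by case: [exists w in H, E w i]; rewrite ?eK.
by apply/orP; right; apply/existsP; exists w; rewrite wH.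
Qed.

Lemma hall_cond_loose G T w i : w \in G ->
  (forall H, H != set0 -> H \proper G -> (#|H| < #|nbhd H T|)%N) ->
  hall_cond (G :\ w) (T :\ i).
Proof.
move=> wG looseG K sK; have [->|K0] := eqVneq K set0; first by rewrite cards0.
have pKG : K \proper G := sub_proper_trans sK (properD1 wG).
rewrite -ltnS; apply: leq_trans (looseG K K0 pKG) _.
rewrite -add1n -(cards1 i); apply: leq_trans (leq_card_setU _ _).1.
apply: subset_leq_card; apply/subsetP => j; rewrite !inE.
by case: eqP.
Qed.

(* The default [i0] only serves to make [s] total. *)
Theorem hall_marriage (i0 : I) G T : hall_cond G T -> exists s, matching G T s.
Proof.
(* Either some nonempty proper H is tight: match H into its neighbourhood and the rest
   outside it; or every such H has a surplus: match any w to any neighbour i and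
   recurse on G minus w, T minus i. *)
have [N] := ubnP #|G|; elim: N G T => // N IH G T; rewrite ltnS => leGN hG.
have [->|[w wG]] := set_0Vmem G; first by exists (fun=> i0); split=> x; rewrite inE.
have [/existsP[H /and3P[H0 pHG tightH]]|/existsPn looseG] :=
  boolP [exists H : {set J}, [&& H != set0, H \proper G & #|nbhd H T| <= #|H|]%N].
  have sHG := proper_sub pHG.
  have [s1 /matching_nbhd mH] : exists s, matching H T s.
    apply: IH (leq_trans (proper_card pHG) leGN) _ => K sKH.
    exact: hG (subset_trans sKH sHG).
  have [s2 mGH] : exists s, matching (G :\: H) (T :\: nbhd H T) s.
    apply: IH (hall_cond_tight hG sHG tightH); apply: leq_trans leGN.
    by rewrite cardsDS // ltn_subrL !card_gt0 H0; apply/set0Pn; exists w.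
  have dT : [disjoint nbhd H T & T :\: nbhd H T].
    by rewrite setDE disjoints_subset setCI setCK subsetUr.
  have sNT : nbhd H T \subset T by apply/subsetP => i; rewrite inE => /andP[].
  rewrite -(setID G H) (setIidPr sHG) -(setID T (nbhd H T)) (setIidPr sNT).
  by eexists; apply: matchingU mH mGH dT.
have /card_gt0P[i] : (0 < #|nbhd [set w] T|)%N by rewrite -(cards1 w) hG ?sub1set.
rewrite inE => /andP[iT Ewi].
have [s ms] : exists s, matching (G :\ w) (T :\ i) s.
  apply: IH; first by rewrite (cardsD1 w G) wG in leGN.
  apply: hall_cond_loose wG _ => H H0 pHG.
  by have := looseG H; rewrite H0 pHG /= -ltnNge.
have mw : matching [set w] [set i] (fun=> i).
  split=> [x y|x]; rewrite !inE => /eqP->; first by move=> /eqP->.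
  by split=> //; move/existsP: Ewi => [w' /andP[]]; rewrite inE => /eqP->.
have dT : [disjoint [set i] & T :\ i] by rewrite disjoints1 !inE eqxx.
rewrite -(setD1K wG) -(setD1K iT).
by eexists; apply: matchingU mw ms dT.
Qed.

End Hall.

Section InfiniteField.
Variables (k : fieldType) (inf_k : infinite_field k).

Lemma infinite_field_uniq_seq m : exists s : seq k, uniq s /\ size s = m.
Proof.
elim: m => [|m [s [us ss]]]; first by exists [::].
by have [x xs] := inf_k s; exists (x :: s); rewrite /= xs us ss.
Qed.

Lemma exists_nonroot (p : {poly k}) : p != 0 -> exists t, ~~ root p t.
Proof.
move=> p0; have [s [us ss]] := infinite_field_uniq_seq (size p).
have /allPn[t _ ?] : ~~ all (root p) s.
  by apply/negP => rs; have := max_poly_roots p0 rs us; rewrite ss ltnn.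
by exists t.
Qed.

End InfiniteField.

Section Generic.
Variables (k : fieldType) (V : lmodType k).
Implicit Types (f : V -> k) (P Q : V -> Prop).

(* [polyline f]: f is polynomial along every affine line. This is all that is needed
   of "f is a polynomial function", and [generic P] says that P holds on a nonempty
   set of the form {f <> 0}. *)
Definition polyline f : Prop :=
  forall x y, exists p : {poly k}, forall t, f (x + t *: (y - x)) = p.[t].

Definition generic P : Prop :=
  exists f, [/\ polyline f, exists x, f x != 0 & forall x, f x != 0 -> P x].

Lemma generic_true P : (forall x, P x) -> generic P.
Proof.
move=> hP; exists (fun=> 1); split=> [x y||x _]; last exact: hP.
  by exists 1 => t; rewrite hornerC.
by exists 0; rewrite oner_neq0.
Qed.

Lemma genericS P Q : (forall x, P x -> Q x) -> generic P -> generic Q.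
Proof. by move=> PQ [f [pf xf fP]]; exists f; split=> // x /fP /PQ. Qed.

Lemma genericI P Q : infinite_field k -> generic P -> generic Q ->
  generic (fun x => P x /\ Q x).
Proof.
move=> inf_k [f [pf [x fx] fP]] [g [pg [y gy] gQ]].
exists (fun z => f z * g z); split=> [z1 z2||z].
- have [p hp] := pf z1 z2; have [q hq] := pg z1 z2.
  by exists (p * q) => t; rewrite hornerM hp hq.
- (* on the line through the two witnesses, fg is a nonzero polynomial *)
  have [p hp] := pf x y; have [q hq] := pg x y.
  have p0 : p != 0.
    by apply: contraNneq fx => p0; rewrite -[x]addr0 -(scale0r (y - x)) hp p0 horner0.
  have q0 : q != 0.
    by apply: contraNneq gy => q0; rewrite -[y](subrK x) addrC -[_ - _]scale1r hq q0 horner0.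
  have [t nr] := exists_nonroot inf_k (mulf_neq0 p0 q0).
  by exists (x + t *: (y - x)); rewrite hp hq -hornerM.
- by rewrite mulf_eq0 negb_or => /andP[/fP ? /gQ ?].
Qed.

Lemma generic_all (J : finType) (P : J -> V -> Prop) : infinite_field k ->
  (forall j, generic (P j)) -> generic (fun x => forall j, P j x).
Proof.
move=> inf_k gP; suff: generic (fun x => forall j, j \in enum J -> P j x).
  by move=> [f [pf xf fP]]; exists f; split=> // x /fP Px j; apply: Px; rewrite mem_enum.
elim: (enum J) => [|j r IH]; first exact: generic_true.
have [f [pf xf fP]] := genericI inf_k (gP j) IH.
exists f; split=> // x /fP[Pj Pr] j'; rewrite inE => /predU1P[->|] //; exact: Pr.
Qed.

Lemma polyline_det m (M : V -> 'M[k]_m) :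
  (forall i j, polyline (fun x => M x i j)) -> polyline (fun x => \det (M x)).
Proof.
move=> pM x y; have /fin_all_exists[P hP] : forall ij : 'I_m * 'I_m,
    exists p : {poly k}, forall t, M (x + t *: (y - x)) ij.1 ij.2 = p.[t].
  by move=> [i j]; exact: pM.
exists (\det (\matrix_(i, j) P (i, j))) => t.
rewrite -horner_evalE -det_map_mx; congr (\det _); apply/matrixP => i j.
by rewrite !mxE /= (hP (i, j)).
Qed.

End Generic.

Lemma polyline_coord (k : fieldType) m n (i : 'I_m) (j : 'I_n) :
  polyline (fun x : 'M[k]_(m, n) => x i j).
Proof.
move=> x y; exists ((x i j)%:P + (y i j - x i j) *: 'X) => t.
by rewrite !mxE !hornerE mulrC.
Qed.

Lemma mxrank_le_nonzero_rows (k : fieldType) m n (A : 'M[k]_(m, n)) :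
  (\rank A <= #|[set i | (row i A != 0)%R]|)%N.
Proof.
set I := [set i | row i A != 0].
apply: leq_trans (rank_leq_row (rowsub (@enum_val _ (mem I)) A)).
apply: mxrankS; apply/row_subP => i.
have [iI|] := boolP (i \in I); last by rewrite inE negbK => /eqP->; apply: sub0mx.
by rewrite -(enum_rankK_in iI iI) -row_rowsub row_sub.
Qed.

Section Restriction.
Variables (k : fieldType) (n d : nat) (a : 'I_d -> 'I_n -> k).

Definition restr_mx (F : {set 'I_n}) : 'M[k]_(d, #|F|) :=
  \matrix_(i, l) a i (enum_val l).

Lemma row_full_restr_card F : row_full (restr_mx F) ->
  (#|F| <= #|[set i | supp (a i) :&: F != set0]|)%N.
Proof.
move=> /eqP <-; apply: leq_trans (mxrank_le_nonzero_rows _) (subset_leq_card _).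
apply/subsetP => i; rewrite !inE; apply: contra_neq => /setP aF0.
apply/rowP => l; have := aF0 (enum_val l).
by rewrite !inE enum_valP andbT !mxE => /negbFE/eqP.
Qed.

Lemma row_full_restr_dual F w : row_full (restr_mx F) -> w \in F ->
  exists lam : 'I_d -> k, forall u, u \in F -> \sum_i lam i * a i u = (u == w)%:R.
Proof.
move=> /row_fullP[B BA] wF; set j := enum_rank_in wF w.
exists (B j) => u uF.
have := congr1 (fun M : 'M[k]_#|F| => M j (enum_rank_in wF u)) BA.
rewrite !mxE (eq_bigr (fun i => B j i * a i u)) => [->|i _]; last first.
  by rewrite mxE enum_rankK_in.
congr (_ %:R); congr (nat_of_bool _).
apply/idP/eqP => [/eqP e|->]; last exact/eqP.
by rewrite -(enum_rankK_in wF uF) -e enum_rankK_in.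
Qed.

Lemma restr_mx_kernel F : ~~ row_full (restr_mx F) ->
  exists v : 'I_n -> k, [/\ exists w, v w != 0, forall w, w \notin F -> v w = 0
     & forall i, \sum_w a i w * v w = 0].
Proof.
have -> : row_full (restr_mx F) = row_free (restr_mx F)^T by rewrite /row_free mxrank_tr.
rewrite -kermx_eq0 => /rowV0Pn[c /sub_kermxP cA /rV0Pn[l cl]].
have lF := enum_valP l; pose v w := if w \in F then c 0 (enum_rank_in lF w) else 0.
exists v; split=> [|w /negbTE wF|i]; first by exists (enum_val l); rewrite /v lF enum_valK_in.
  by rewrite /v wF.
have := congr1 (fun M : 'rV_d => M 0 i) cA; rewrite !mxE (big_enum_rank lF) => {2}<-.
rewrite [RHS]big_mkcond; apply: eq_bigr => w _; rewrite /v.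
by case: ifP => wF; rewrite ?mulr0 // !mxE enum_rankK_in // mulrC.
Qed.

End Restriction.

Lemma exists_seq_nth (T : Type) (x0 : T) m (f : 'I_m -> T) :
  exists s : seq T, size s = m /\ forall i : 'I_m, nth x0 s i = f i.
Proof.
exists [tuple f i | i < m]; rewrite size_tuple; split=> // i.
by rewrite -tnth_nth tnth_mktuple.
Qed.

Section Ideal.
Variables (k : fieldType) (n : nat) (G : seq {mpoly k[n]}).
Implicit Types (p q : {mpoly k[n]}).

Lemma in_idealP p :
  in_ideal G p <-> exists f : 'I_(size G) -> {mpoly k[n]}, p = \sum_i f i * G`_i.
Proof.
split=> [[cs [_ ->]]|[f ->]]; first by exists (fun i => cs`_i).
have [cs [size_cs cs_f]] := exists_seq_nth 0 f.
by exists cs; split=> //; apply: eq_bigr => i _; rewrite cs_f.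
Qed.

Lemma in_ideal0 : in_ideal G 0.
Proof. by apply/in_idealP; exists (fun=> 0); rewrite big1 // => i _; rewrite mul0r. Qed.

Lemma in_idealD p q : in_ideal G p -> in_ideal G q -> in_ideal G (p + q).
Proof.
move=> /in_idealP[f ->] /in_idealP[g ->]; apply/in_idealP; exists (fun i => f i + g i).
by rewrite -big_split; apply: eq_bigr => i _; rewrite mulrDl.
Qed.

Lemma in_idealMl q p : in_ideal G p -> in_ideal G (q * p).
Proof.
move=> /in_idealP[f ->]; apply/in_idealP; exists (fun i => q * f i).
by rewrite mulr_sumr; apply: eq_bigr => i _; rewrite mulrA.
Qed.

Lemma in_idealZ c p : in_ideal G p -> in_ideal G (c *: p).
Proof. by rewrite -mul_mpolyC; apply: in_idealMl. Qed.

Lemma in_idealB p q : in_ideal G p -> in_ideal G q -> in_ideal G (p - q).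
Proof. by move=> Ip Iq; rewrite -scaleN1r; apply/in_idealD/in_idealZ. Qed.

Lemma in_ideal_sum (I : Type) (r : seq I) (P : pred I) (F : I -> {mpoly k[n]}) :
  (forall i, P i -> in_ideal G (F i)) -> in_ideal G (\sum_(i <- r | P i) F i).
Proof. by move=> IF; elim/big_ind: _ => //; [apply: in_ideal0 | apply: in_idealD]. Qed.

Lemma mem_in_ideal p : p \in G -> in_ideal G p.
Proof.
move=> pG; have lt_pG : (index p G < size G)%N by rewrite index_mem.
apply/in_idealP; exists (fun i => (i == Ordinal lt_pG)%:R).
rewrite (bigD1 (Ordinal lt_pG)) //= eqxx mul1r nth_index // big1 ?addr0 // => i.
by move=> /negbTE->; rewrite mul0r.
Qed.

Lemma fin_dim_quotient_of_monomials D :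
  (forall m, (D < mdeg m)%N -> in_ideal G 'X_[m]) -> fin_dim_quotient G.
Proof.
move=> high_in_ideal.
pose B : seq {mpoly k[n]} := [seq 'X_[bmnm b] | b <- enum {: 'X_{1..n < D.+1}}].
suff span_B : forall p, exists c : 'I_(size B) -> k,
    in_ideal G (p - \sum_i c i *: B`_i).
  exists B => p; have [c Ic] := span_B p; have [cs [_ cs_c]] := exists_seq_nth 0 c.
  by exists cs; under eq_bigr => i _ do rewrite cs_c.
elim/mpolyind => [|c m p _ _ [e Ie]].
  exists (fun=> 0); rewrite big1 ?subr0 => [|i _]; [exact: in_ideal0 | exact: scale0r].
have [small_m|big_m] := leqP (mdeg m) D; last first.
  by exists e; rewrite -addrA; apply/in_idealD/Ie/in_idealZ/high_in_ideal.
have mB : 'X_[m] \in B.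
  by apply/mapP; exists (BMultinom (small_m : mdeg m < D.+1)%N); rewrite ?mem_enum.
have lt_mB : (index 'X_[m] B < size B)%N by rewrite index_mem.
exists (fun i => c * (i == Ordinal lt_mB)%:R + e i).
under eq_bigr => i _ do rewrite scalerDl.
rewrite big_split /= (bigD1 (Ordinal lt_mB)) //= eqxx mulr1 nth_index //.
rewrite big1 ?addr0 => [|i /negbTE->]; last by rewrite mulr0 scale0r.
by rewrite opprD addrACA subrr add0r.
Qed.

End Ideal.

Definition mnm_supp n (m : 'X_{1..n}) : {set 'I_n} := [set w | m w != 0%N].

Lemma mnm_sum_supp_le n (m : 'X_{1..n}) : (\sum_(w in mnm_supp m) U_(w) <= m)%MM.
Proof.
apply/mnm_lepP => i; rewrite mnm_sumE (eq_bigr (fun w => (w == i) : nat)) => [|w _]; last first.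
  by rewrite mnm1E.
rewrite big_mkcond /= (bigD1 i) //= eqxx big1 => [|w /negbTE]; last first.
  by rewrite eq_sym => ->; case: ifP.
by rewrite addn0; case: ifP; rewrite // inE lt0n.
Qed.

Lemma mdeg_gt_card_supp n (m : 'X_{1..n}) :
  (#|mnm_supp m| < mdeg m)%N -> exists w, (1 < m w)%N.
Proof.
move=> lt_supp; have [/existsP//|/existsPn m_le1] := boolP [exists w, 1 < m w]%N.
suff : (mdeg m <= #|mnm_supp m|)%N by rewrite leqNgt lt_supp.
rewrite mdegE -sum1_card [X in (_ <= X)%N]big_mkcond /=; apply: leq_sum => w _.
by rewrite inE; case: eqP => [->|_] //=; rewrite leqNgt m_le1.
Qed.

Lemma mnm_supp_shift n (m : 'X_{1..n}) w u : (1 < m w)%N ->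
  mnm_supp (m - U_(w) + U_(u))%MM = u |: mnm_supp m.
Proof.
move=> m_w; apply/setP => v; rewrite !inE mnmDE mnmBE !mnm1E.
case: (eqVneq u v) => [<-|_]; first by rewrite addn1.
rewrite addn0; case: (eqVneq w v) => [<-|_]; last by rewrite subn0.
by move: m_w; case: (m w) => [|[]].
Qed.

Section Sufficiency.
Variables (k : fieldType) (n d : nat) (Gamma : {set {set 'I_n}}) (a : 'I_d -> 'I_n -> k).
Local Notation Gs := (SR_gens k Gamma ++ [seq linform (a i) | i <- enum 'I_d]).

Lemma monoF_in_ideal F : F \notin Gamma -> in_ideal Gs (monoF k F).
Proof.
by move=> nF; apply/mem_in_ideal; rewrite mem_cat map_f // mem_enum inE.
Qed.

Lemma linform_in_ideal i : in_ideal Gs (linform (a i)).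
Proof.
by apply/mem_in_ideal; rewrite mem_cat (map_f (fun i => linform (a i))) ?orbT ?mem_enum.
Qed.

Lemma monomial_nonface_in_ideal m : mnm_supp m \notin Gamma -> in_ideal Gs 'X_[m].
Proof.
move=> nF; have -> : 'X_[m] = 'X_[m - \sum_(w in mnm_supp m) U_(w)] * monoF k (mnm_supp m).
  by rewrite /monoF mprodXE -mpolyXD submK // mnm_sum_supp_le.
exact/in_idealMl/monoF_in_ideal.
Qed.

Lemma linform_comb (lam : 'I_d -> k) :
  \sum_i lam i *: linform (a i) = \sum_u (\sum_i lam i * a i u) *: 'X_u.
Proof.
rewrite /linform; under eq_bigr => i _ do rewrite scaler_sumr.
rewrite exchange_big; apply: eq_bigr => u _.
by rewrite scaler_suml; apply: eq_bigr => i _; rewrite scalerA.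
Qed.

Lemma var_mod_forms F w : row_full (restr_mx a F) -> w \in F ->
  exists c : 'I_n -> k, in_ideal Gs ('X_w + \sum_(u | u \notin F) c u *: 'X_u).
Proof.
move=> fullF wF; have [lam dual] := row_full_restr_dual fullF wF.
exists (fun u => \sum_i lam i * a i u).
have : in_ideal Gs (\sum_i lam i *: linform (a i)).
  by apply: in_ideal_sum => i _; apply/in_idealZ/linform_in_ideal.
rewrite linform_comb (bigID (fun u => u \in F)) /= (bigD1 w) //= dual // eqxx scale1r.
by rewrite big1 ?addr0 // => u /andP[uF /negbTE uw]; rewrite dual // uw scale0r.
Qed.

Lemma high_monomial_in_ideal :
  (forall F, F \in Gamma -> #|F| <= d)%N ->
  (forall F, F \in Gamma -> row_full (restr_mx a F)) ->
  forall m, (d < mdeg m)%N -> in_ideal Gs 'X_[m].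
Proof.
(* Induction on the number of variables missing from m. If supp m is a face, some
   exponent m w is >= 2, and trading one x_w for variables outside supp m
   (var_mod_forms) enlarges the support. *)
move=> small full m; have [N] := ubnP #|~: mnm_supp m|.
elim: N m => // N IH m; rewrite ltnS => co_m deg_m.
have [Fm|] := boolP (mnm_supp m \in Gamma); last exact: monomial_nonface_in_ideal.
have [w m_w] := mdeg_gt_card_supp (leq_ltn_trans (small _ Fm) deg_m).
have wm : w \in mnm_supp m by rewrite inE -lt0n ltnW.
have [c Ic] := var_mod_forms (full _ Fm) wm.
have mE : m = (m - U_(w) + U_(w))%MM by rewrite submK // lep1mP -lt0n ltnW.
have -> : 'X_[m] = 'X_[m - U_(w)] * ('X_w + \sum_(u | u \notin mnm_supp m) c u *: 'X_u)
    - \sum_(u | u \notin mnm_supp m) c u *: 'X_[m - U_(w) + U_(u)].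
  rewrite mulrDr -mpolyXD -mE mulr_sumr -addrA [X in _ + X](_ : _ = 0) ?addr0 //.
  by apply/eqP; rewrite subr_eq0; apply/eqP/eq_bigr => u _; rewrite -scalerAr mpolyXD.
apply: in_idealB; first exact: in_idealMl.
apply: in_ideal_sum => u um; apply/in_idealZ/IH.
  by rewrite mnm_supp_shift // setCU setIC -setDE; move: co_m; rewrite (cardsD1 u) inE um.
by rewrite mdegD mdeg1 -(mdeg1 w) -mdegD -mE.
Qed.

Theorem row_full_lsop :
  (forall F, F \in Gamma -> #|F| <= d)%N ->
  (forall F, F \in Gamma -> row_full (restr_mx a F)) ->
  is_lsop Gamma (fun i => linform (a i)).
Proof. by move=> small full; apply/fin_dim_quotient_of_monomials/high_monomial_in_ideal. Qed.

End Sufficiency.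

Section Evaluation.
Variables (k : fieldType) (n : nat) (G : seq {mpoly k[n]}) (h : 'I_n -> {poly k}).
Local Notation ev := (mmap (@polyC k) h).
Hypothesis ev_gens : forall g, g \in G -> ev g = 0.

Lemma mmap_in_ideal_eq0 p : in_ideal G p -> ev p = 0.
Proof.
move=> /in_idealP[f ->]; rewrite rmorph_sum big1 // => i _.
by rewrite rmorphM /= (ev_gens (mem_nth 0 (ltn_ord i))) mulr0.
Qed.

Lemma fin_dim_quotient_mmap_bounded :
  fin_dim_quotient G -> exists N, forall p, (size (ev p) <= N)%N.
Proof.
move=> [B spanB]; exists (\max_(b <- B) size (ev b)) => p.
have [c /mmap_in_ideal_eq0] := spanB p; rewrite rmorphB /= => /eqP.
rewrite subr_eq0 => /eqP->; rewrite rmorph_sum; apply: leq_trans (size_sum _ _ _) _.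
apply/bigmax_leqP => i _; rewrite /= mmapZ mul_polyC; apply: leq_trans (size_scale_leq _ _) _.
exact: leq_bigmax_seq (mem_nth 0 (ltn_ord i)) _.
Qed.

End Evaluation.

Section Necessity.
Variables (k : fieldType) (n d : nat) (Gamma : {set {set 'I_n}}) (a : 'I_d -> 'I_n -> k).
Hypothesis Gamma_sc : simplicial_complex Gamma.
Local Notation Gs := (SR_gens k Gamma ++ [seq linform (a i) | i <- enum 'I_d]).

Lemma kernel_eval_gens F (v : 'I_n -> k) : F \in Gamma ->
  (forall w, w \notin F -> v w = 0) -> (forall i, \sum_w a i w * v w = 0) ->
  forall g, g \in Gs -> mmap (@polyC k) (fun w => v w *: 'X) g = 0.
Proof.
move=> FG vF va g; rewrite mem_cat => /orP[/mapP[F' + ->]|/mapP[i _ ->]].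
  rewrite mem_enum inE => nF'.
  have /subsetPn[w wF' wF] : ~~ (F' \subset F) by apply: contra nF' => /(Gamma_sc.2 _ _ FG).
  by rewrite /monoF rmorph_prod (bigD1 w) //= mmapX mmap1U vF ?scale0r ?mul0r.
rewrite /linform raddf_sum /=.
under eq_bigr => w _ do rewrite mmapZ mmapX mmap1U mul_polyC scalerA.
by rewrite -scaler_suml va scale0r.
Qed.

Lemma lsop_row_full F : is_lsop Gamma (fun i => linform (a i)) -> F \in Gamma ->
  row_full (restr_mx a F).
Proof.
move=> lsop FG; apply: contraT => /restr_mx_kernel[v [[w0 vw0] vF va]].
have [N bound] := fin_dim_quotient_mmap_bounded (kernel_eval_gens FG vF va) lsop.
have := bound ('X_w0 ^+ N); rewrite rmorphXn /= mmapX mmap1U exprZn.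
by rewrite size_scale ?expf_neq0 // size_polyXn ltnn.
Qed.

End Necessity.

Section Construction.
Variables (k : fieldType) (n d : nat) (Gamma : {set {set 'I_n}}) (S : 'I_d -> {set 'I_n}).
Hypotheses (inf_k : infinite_field k) (Gamma_sc : simplicial_complex Gamma).
Hypothesis S_cover : forall F, F \in Gamma ->
  (#|F| <= #|[set i | S i :&: F != set0]|)%N.

Definition mask (x : 'M[k]_(d, n)) i w := if w \in S i then x i w else 0.

Lemma generic_row_full_matching (G : {set 'I_n}) (sigma : 'I_n -> 'I_d) :
  {in G &, injective sigma} -> (forall w, w \in G -> w \in S (sigma w)) ->
  generic (fun x => row_full (restr_mx (mask x) G)).
Proof.
move=> inj_sig sigS; pose rows (j : 'I_#|G|) := sigma (enum_val j).
exists (fun x => \det (rowsub rows (restr_mx (mask x) G))); split.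
- apply: polyline_det => j l x y.
  have [p hp] := @polyline_coord k _ _ (rows j) (enum_val l) x y.
  exists (if enum_val l \in S (rows j) then p else 0) => t.
  by rewrite !mxE /mask; case: ifP => _; rewrite ?horner0.
- (* at the 0/1 matrix of the matching the minor is the identity *)
  exists (\matrix_(i, w) (i == sigma w)%:R).
  suff -> : rowsub rows (restr_mx (mask (\matrix_(i, w) (i == sigma w)%:R)) G) = 1%:M.
    by rewrite det1 oner_neq0.
  apply/matrixP => j l; rewrite !mxE /mask mxE (inj_in_eq inj_sig) ?enum_valP //.
  rewrite (inj_eq enum_val_inj); case: eqP => [->|_]; first by rewrite sigS ?enum_valP.
  by case: ifP.
- move=> x; rewrite -unitfE -unitmxE -row_full_unit -!sub1mx => /submx_trans; apply.
  exact: rowsub_sub.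
Qed.

Lemma face_matching (G : {set 'I_n}) (i0 : 'I_d) : G \in Gamma ->
  exists sigma : 'I_n -> 'I_d,
    {in G &, injective sigma} /\ forall w, w \in G -> w \in S (sigma w).
Proof.
move=> GG.
have [|sigma [inj_sig sigS]] := @hall_marriage _ _ (fun w i => w \in S i) i0 G setT.
  move=> H sHG; apply: leq_trans (S_cover (Gamma_sc.2 _ _ GG sHG)) (subset_leq_card _).
  apply/subsetP => i; rewrite !inE => /set0Pn[w]; rewrite inE => /andP[wS wH].
  by apply/existsP; exists w; rewrite wH.
by exists sigma; split=> // w /sigS[].
Qed.

Lemma generic_row_full_face (F : {set 'I_n}) :
  generic (fun x => F \in Gamma -> row_full (restr_mx (mask x) F)).
Proof.
have [FG|_] := boolP (F \in Gamma); last exact: generic_true.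
apply: genericS (fun x full _ => full) _.
have [->|[w wF]] := set_0Vmem F.
  by apply: generic_true => x; rewrite -col_leq_rank [X in (X <= _)%N]cards0.
have /card_gt0P[i0 _] : (0 < #|[set i | S i :&: F != set0]|)%N.
  by apply: leq_trans (S_cover FG); rewrite card_gt0; apply/set0Pn; exists w.
have [sigma [inj_sig sigS]] := face_matching i0 FG.
exact: generic_row_full_matching inj_sig sigS.
Qed.

Lemma exists_generic_forms : exists a : 'I_d -> 'I_n -> k,
  (forall i, supp (a i) = S i) /\ forall F, F \in Gamma -> row_full (restr_mx a F).
Proof.
have : generic (fun x : 'M[k]_(d, n) =>
    (forall F, F \in Gamma -> row_full (restr_mx (mask x) F)) /\
    forall iw : 'I_d * 'I_n, iw.2 \in S iw.1 -> x iw.1 iw.2 != 0).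
  apply: genericI inf_k _ _; apply: (generic_all (P := fun _ _ => _)) => //.
    exact: generic_row_full_face.
  move=> [i w].
  have [wS|wS] := boolP (w \in S i); last exact: generic_true.
  exists (fun x : 'M[k]_(d, n) => x i w); split=> [||x xiw _] //; first exact: polyline_coord.
  by exists (const_mx 1); rewrite mxE oner_neq0.
case=> f [_ [x fx] /(_ x fx)[full nz]].
exists (mask x); split=> // i; apply/setP => w; rewrite !inE /mask.
by case: ifP => wS; [exact: (nz (i, w)) | rewrite eqxx].
Qed.

End Construction.

Theorem lemma2p2 (k : fieldType) (n d : nat) (Gamma : {set {set 'I_n}})
    (S : 'I_d -> {set 'I_n}) :
  infinite_field k ->
  simplicial_complex Gamma ->
  has_dim_minus1 Gamma d ->
  (forall i, S i \subset vertices Gamma) ->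
  (exists a : 'I_d -> 'I_n -> k,
      is_lsop Gamma (fun i => linform (a i)) /\ forall i, supp (a i) = S i)
  <->
  (forall F : {set 'I_n}, F \in Gamma ->
      (#|F| <= #|[set i : 'I_d | S i :&: F != set0]|)%N).
Proof.
move=> inf_k Gamma_sc dimG _; split=> [[a [lsop supp_a]] F FG|S_cover].
  suff -> : [set i | S i :&: F != set0] = [set i | supp (a i) :&: F != set0].
    exact: row_full_restr_card (lsop_row_full Gamma_sc lsop FG).
  by apply/setP => i; rewrite !inE supp_a.
have [a [supp_a full_a]] := exists_generic_forms inf_k Gamma_sc S_cover.
exists a; split=> //; apply: row_full_lsop full_a => F FG.
by rewrite -dimG; apply: leq_bigmax_cond.
Qed.
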